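(* Let $m\ge2$, $n\ge1$. For every injective group homomorphism $\rho:BS(1,m)\to T_n(\mathbb Z[1/m])$, the group $\rho(BS(1,m))$ has the congruence subgroup property.
   Context: $BS(1,m)=\langle a,t\mid tat^{-1}=a^m\rangle$. $T_n(\mathbb Z[1/m])$ is the group of invertible upper triangular $n\times n$ matrices with entries in $\mathbb Z[1/m]$. For a subgroup $G\le GL_n(\mathbb Z[1/m])$ and an integer $N>0$ coprime to $m$, the congruence subgroup $G(N)$ is $G\cap\ker\big(GL_n(\mathbb Z[1/m])\to GL_n(\mathbb Z/N\mathbb Z)\big)$ (reduction modulo $N$, using $\mathbb Z[1/m]/N\mathbb Z[1/m]\cong\mathbb Z/N\mathbb Z$). $G$ has the congruence subgroup property (CSP) if every finite-index subgroup of $G$ contains $G(N)$ for some $N>0$ coprime to $m$. *)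

From Stdlib Require Import Relations.
From mathcomp Require Import all_boot all_order all_algebra.
Set Implicit Arguments. Unset Strict Implicit. Unset Printing Implicit Defensive.
Import Order.TTheory GRing.Theory Num.Theory.
Local Open Scope ring_scope.

Definition inZinv (m : nat) (x : rat) : Prop :=
  exists (z : int) (k : nat), x = z%:~R / (m%:R ^+ k).

Definition entries_in (m n : nat) (A : 'M[rat]_n) : Prop :=
  forall i j : 'I_n, inZinv m (A i j).

Definition upper_tri (n : nat) (A : 'M[rat]_n) : Prop :=
  forall i j : 'I_n, (j < i)%N -> A i j = 0.

Definition in_Tn (m n : nat) (A : 'M[rat]_n) : Prop :=
  [/\ upper_tri A, entries_in m A, A \in unitmx & entries_in m (invmx A)].

(* ---------- The Baumslag-Solitar group BS(1,m) = < a, t | t a t^-1 = a^m >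
   given literally by its presentation: words in the free monoid on
   a, a^-1, t, t^-1, modulo the congruence generated by free cancellation and
   the defining relator.  A letter is (g, e): g = false is a, g = true is t;
   e = false is the generator, e = true its inverse. *)
Definition bsword := seq (bool * bool).

Definition la : bool * bool := (false, false).
Definition laI : bool * bool := (false, true).
Definition lt : bool * bool := (true, false).
Definition ltI : bool * bool := (true, true).

Definition bs_rule (m : nat) (x y : bsword) : Prop :=
  (exists g : bool, x = [:: (g, false); (g, true)] /\ y = [::]) \/
  (exists g : bool, x = [:: (g, true); (g, false)] /\ y = [::]) \/
  (x = [:: lt; la; ltI] /\ y = nseq m la).

Definition bs_step (m : nat) (u v : bsword) : Prop :=
  exists p s x y, bs_rule m x y /\ u = p ++ x ++ s /\ v = p ++ y ++ s.

Definition bs_eq (m : nat) : relation bsword :=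
  clos_refl_sym_trans bsword (bs_step m).

(* A group homomorphism rho : BS(1,m) -> GL_n(Q), presented on
   representative words: multiplicative, unital, and well defined on
   classes. *)
Definition bs_hom (m n : nat) (rho : bsword -> 'M[rat]_n) : Prop :=
  [/\ rho [::] = 1%:M,
      forall u v, rho (u ++ v) = rho u *m rho v
    & forall u v, bs_eq m u v -> rho u = rho v].

Definition bs_injective (m n : nat) (rho : bsword -> 'M[rat]_n) : Prop :=
  forall u v, rho u = rho v -> bs_eq m u v.

Definition bs_image (n : nat) (rho : bsword -> 'M[rat]_n) (g : 'M[rat]_n) : Prop :=
  exists w, g = rho w.

Definition is_subgroup_of (n : nat) (G H : 'M[rat]_n -> Prop) : Prop :=
  [/\ forall h, H h -> G h,
      H 1%:M,
      forall h k, H h -> H k -> H (h *m k)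
    & forall h, H h -> H (invmx h)].

Definition finite_index_in (n : nat) (G H : 'M[rat]_n -> Prop) : Prop :=
  exists s : seq 'M[rat]_n, (forall g, g \in s -> G g) /\
    forall g, G g -> exists2 g0, g0 \in s & exists2 h, H h & g = g0 *m h.

(* G(N) = G ∩ ker(GL_n(Z[1/m]) -> GL_n(Z/N)): all entries of g - 1 lie in
   N Z[1/m] (for N coprime to m, Z[1/m]/N Z[1/m] = Z/NZ). *)
Definition congr_sub (m n N : nat) (G : 'M[rat]_n -> Prop) (g : 'M[rat]_n) : Prop :=
  G g /\ forall i j : 'I_n, inZinv m ((g i j - (i == j)%:R) / N%:R).

Definition has_CSP (m n : nat) (G : 'M[rat]_n -> Prop) : Prop :=
  forall H, is_subgroup_of G H -> finite_index_in G H ->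
    exists N : nat, [/\ (0 < N)%N, coprime N m &
      forall g, congr_sub m N G g -> H g].

From mathcomp Require Import all_boot all_order all_algebra.
From mathcomp Require Import zify ring lra.
From Stdlib Require Import Relations ClassicalEpsilon.
Set Implicit Arguments. Unset Strict Implicit. Unset Printing Implicit Defensive.
Import Order.TTheory GRing.Theory Num.Theory.
Local Open Scope ring_scope.

(* Write A = rho(a), T = rho(t) and G for the image.  Every element of G has a
   normal form T^-p A^z T^q.  Comparing diagonals in T A = A^m T shows that the
   diagonal of A consists of signs, so U = A^2 is unipotent; it is nontrivial
   since a^2 <> 1 (the affine action a : x |-> x+1, t : x |-> m x).  Taking a
   nonzero entry Y_ij of Y = U - 1 on its lowest nonzero superdiagonal we get
   (U^y - 1)_ij = y Y_ij and T_ii = m T_jj.  A subgroup H of finite index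
   contains all D-th powers, D = (number of cosets)!.  For a suitable level
   N = (m^M + 1) N2 with N2 coprime to m, an element T^-p A^z T^q = 1 mod N has:
   M | q - p, since its (i,i) and (j,j) entries differ by ± m^(q-p) and
   m^k = ±1 mod m^M + 1 forces M | k; then A^z = 1 mod N2, which makes the
   m-free part of D divide z; these divisibilities write the element as a
   product of D-th powers, so it lies in H. *)

Section ZinvRing.
Variable m : nat.
Hypothesis m_gt0 : (0 < m)%N.

Lemma expr_natm_neq0 k : (m%:R : rat) ^+ k != 0.
Proof. by rewrite expf_neq0 // pnatr_eq0 -lt0n. Qed.

Lemma intr_expn (k : nat) : ((m ^ k)%N%:Z)%:~R = (m%:R : rat) ^+ k.
Proof. by rewrite -natrX. Qed.

Lemma inZinv_int (z : int) : inZinv m z%:~R.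
Proof. by exists z, 0%N; rewrite expr0 divr1. Qed.

Lemma inZinv0 : inZinv m 0.
Proof. exact: (inZinv_int 0). Qed.

Lemma inZinv1 : inZinv m 1.
Proof. exact: (inZinv_int 1). Qed.

Lemma inZinv_nat (k : nat) : inZinv m k%:R.
Proof. by have := inZinv_int k; rewrite -pmulrn. Qed.

Lemma inZinv_expm k : inZinv m (m%:R ^+ k).
Proof. by rewrite -natrX; apply: inZinv_nat. Qed.

Lemma inZinv_add x y : inZinv m x -> inZinv m y -> inZinv m (x + y).
Proof.
move=> [z1 [k1 ->]] [z2 [k2 ->]].
exists (z1 * (m ^ k2)%:Z + z2 * (m ^ k1)%:Z), (k1 + k2)%N.
have h1 := expr_natm_neq0 k1; have h2 := expr_natm_neq0 k2.
rewrite exprD rmorphD !rmorphM /= !intr_expn.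
by field; rewrite h1 h2.
Qed.

Lemma inZinv_mul x y : inZinv m x -> inZinv m y -> inZinv m (x * y).
Proof.
move=> [z1 [k1 ->]] [z2 [k2 ->]]; exists (z1 * z2), (k1 + k2)%N.
have h1 := expr_natm_neq0 k1; have h2 := expr_natm_neq0 k2.
by rewrite exprD rmorphM /=; field; rewrite h1 h2.
Qed.

Lemma inZinv_opp x : inZinv m x -> inZinv m (- x).
Proof. by move=> h; rewrite -mulN1r; apply: inZinv_mul => //; apply: (inZinv_int (-1)). Qed.

Lemma inZinv_sub x y : inZinv m x -> inZinv m y -> inZinv m (x - y).
Proof. by move=> hx hy; apply: inZinv_add => //; apply: inZinv_opp. Qed.

Lemma inZinv_sum (I : Type) (r : seq I) (P : pred I) (F : I -> rat) :
  (forall i, P i -> inZinv m (F i)) -> inZinv m (\sum_(i <- r | P i) F i).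
Proof. by move=> h; apply: big_ind => //; [exact: inZinv0 | exact: inZinv_add]. Qed.

End ZinvRing.

Definition dvdZinv (m N : nat) (x : rat) : Prop := inZinv m (x / N%:R).

Section ZinvIdeal.
Variables (m N : nat).
Hypothesis m_gt0 : (0 < m)%N.

Lemma dvdZinv0 : dvdZinv m N 0.
Proof. by rewrite /dvdZinv mul0r; exact: inZinv0. Qed.

Lemma dvdZinv_add x y : dvdZinv m N x -> dvdZinv m N y -> dvdZinv m N (x + y).
Proof. by rewrite /dvdZinv mulrDl; apply: inZinv_add. Qed.

Lemma dvdZinv_opp x : dvdZinv m N x -> dvdZinv m N (- x).
Proof. by rewrite /dvdZinv mulNr; apply: inZinv_opp. Qed.

Lemma dvdZinv_sub x y : dvdZinv m N x -> dvdZinv m N y -> dvdZinv m N (x - y).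
Proof. by move=> hx hy; apply: dvdZinv_add => //; apply: dvdZinv_opp. Qed.

Lemma dvdZinv_mull x y : inZinv m y -> dvdZinv m N x -> dvdZinv m N (y * x).
Proof. by rewrite /dvdZinv -mulrA; apply: inZinv_mul. Qed.

Lemma dvdZinv_mulr x y : inZinv m y -> dvdZinv m N x -> dvdZinv m N (x * y).
Proof. by rewrite mulrC; apply: dvdZinv_mull. Qed.

Lemma dvdZinv_sum (I : Type) (r : seq I) (P : pred I) (F : I -> rat) :
  (forall i, P i -> dvdZinv m N (F i)) -> dvdZinv m N (\sum_(i <- r | P i) F i).
Proof. by move=> h; apply: big_ind => //; [exact: dvdZinv0 | exact: dvdZinv_add]. Qed.

Lemma dvdZinv_dvd d x : (d %| N)%N -> (0 < N)%N -> dvdZinv m N x -> dvdZinv m d x.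
Proof.
move=> /dvdnP[e ->] hN; rewrite /dvdZinv => h.
have /andP[he hd] : ((e%:R : rat) != 0) && ((d%:R : rat) != 0).
  by rewrite !pnatr_eq0 -!lt0n -muln_gt0.
have -> : x / d%:R = (x / (e * d)%:R) * e%:R by rewrite natrM; field; rewrite he hd.
by apply: inZinv_mul => //; apply: inZinv_nat.
Qed.

Lemma dvdZinv_intmul (z : int) : (N%:Z %| z)%Z -> dvdZinv m N z%:~R.
Proof.
move=> /dvdzP[q ->]; rewrite /dvdZinv.
have [->|N0] := eqVneq N 0%N; first by rewrite invr0 mulr0; exact: inZinv0.
by rewrite rmorphM /= mulfK ?pnatr_eq0 //; exact: inZinv_int.
Qed.

Lemma dvdZinv_int z : (0 < N)%N -> coprime N m -> dvdZinv m N z%:~R -> (N%:Z %| z)%Z.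
Proof.
move=> N0 cNm [w [k e]].
have hmk := expr_natm_neq0 m_gt0 k.
have hN : (N%:R : rat) != 0 by rewrite pnatr_eq0 -lt0n.
have e2 : (z * (m ^ k)%N%:Z)%:~R = (w * N%:Z)%:~R :> rat.
  by rewrite !rmorphM /= intr_expn -(divfK hN (z%:~R)) e; field.
have : (N%:Z %| z * (m ^ k)%N%:Z)%Z by rewrite (intr_inj e2) dvdz_mull.
by rewrite Gauss_dvdzl // coprimezE /= coprimeXr.
Qed.

Lemma inZinv_residue x : coprime N m -> inZinv m x -> exists w : int, dvdZinv m N (x - w%:~R).
Proof.
move=> cNm [z [k ->]].
have : coprimez ((m ^ k)%N%:Z) (N%:Z) by rewrite coprimezE /= coprime_sym coprimeXr.
move=> /coprimezP[[u v] /= huv].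
exists (z * u); rewrite /dvdZinv.
have hmk := expr_natm_neq0 m_gt0 k.
have huvR : u%:~R * m%:R ^+ k + v%:~R * N%:R = 1 :> rat.
  by have := congr1 (fun t : int => t%:~R : rat) huv; rewrite rmorphD !rmorphM /= intr_expn.
have [->|N0] := eqVneq N 0%N; first by rewrite invr0 mulr0; exact: inZinv0.
have hN : (N%:R : rat) != 0 by rewrite pnatr_eq0.
have -> : (z%:~R / m%:R ^+ k - (z * u)%:~R) / N%:R = (z * v)%:~R / m%:R ^+ k :> rat.
  rewrite !intrM; have -> : u%:~R = (1 - v%:~R * N%:R) / m%:R ^+ k :> rat.
    by apply: (mulIf hmk); rewrite divfK //; lra.
  by field; rewrite hmk hN.
by exists (z * v), k.
Qed.

Definition residue (x : rat) : int :=
  epsilon (inhabits 0) (fun w : int => dvdZinv m N (x - w%:~R)).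

Lemma residueP x : coprime N m -> inZinv m x -> dvdZinv m N (x - (residue x)%:~R).
Proof.
move=> c hx; apply: (epsilon_spec (inhabits 0) (fun w : int => dvdZinv m N (x - w%:~R))).
exact: inZinv_residue.
Qed.

End ZinvIdeal.

Definition mx_dvdZinv (m N n : nat) (X : 'M[rat]_n) : Prop :=
  forall i j, dvdZinv m N (X i j).

Lemma mulmx_entry n (X Y : 'M[rat]_n.+1) i j : (X * Y) i j = \sum_k X i k * Y k j.
Proof. by rewrite -mulmxE mxE. Qed.

Lemma add_entry n (X Y : 'M[rat]_n) i j : (X + Y) i j = X i j + Y i j.
Proof. by rewrite !mxE. Qed.

Lemma sub_entry n (X Y : 'M[rat]_n) i j : (X - Y) i j = X i j - Y i j.
Proof. by rewrite !mxE. Qed.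

Lemma one_entry n (i j : 'I_n.+1) : (1 : 'M[rat]_n.+1) i j = (i == j)%:R.
Proof. by rewrite !mxE. Qed.

Section ZinvMatrices.
Variables (m N n : nat).
Hypothesis m_gt0 : (0 < m)%N.
Local Notation M := ('M[rat]_n.+1).

Lemma entries_in_mul (X Y : M) : entries_in m X -> entries_in m Y -> entries_in m (X * Y).
Proof.
move=> hX hY i j; rewrite mulmx_entry; apply: inZinv_sum => // k _; exact: inZinv_mul.
Qed.

Lemma entries_in1 : entries_in m (1 : M).
Proof. by move=> i j; rewrite one_entry; case: (i == j); [exact: inZinv1 | exact: inZinv0]. Qed.

Lemma entries_in_X (X : M) k : entries_in m X -> entries_in m (X ^+ k).
Proof.
move=> h; elim: k => [|k IH]; first by rewrite expr0; exact: entries_in1.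
by rewrite exprS; exact: entries_in_mul.
Qed.

Lemma entries_in_sub (X Y : M) : entries_in m X -> entries_in m Y -> entries_in m (X - Y).
Proof. by move=> hX hY i j; rewrite !mxE; apply: inZinv_sub. Qed.

Lemma mx_dvdZinv_mull (X Y : M) : entries_in m Y -> mx_dvdZinv m N X -> mx_dvdZinv m N (Y * X).
Proof.
move=> hY hX i j; rewrite mulmx_entry; apply: dvdZinv_sum => // k _; exact: dvdZinv_mull.
Qed.

Lemma mx_dvdZinv_mulr (X Y : M) : mx_dvdZinv m N X -> entries_in m Y -> mx_dvdZinv m N (X * Y).
Proof.
move=> hX hY i j; rewrite mulmx_entry; apply: dvdZinv_sum => // k _; exact: dvdZinv_mulr.
Qed.

Lemma mx_dvdZinv_add (X Y : M) : mx_dvdZinv m N X -> mx_dvdZinv m N Y -> mx_dvdZinv m N (X + Y).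
Proof. by move=> hX hY i j; rewrite !mxE; apply: dvdZinv_add. Qed.

Lemma mx_dvdZinv_opp (X : M) : mx_dvdZinv m N X -> mx_dvdZinv m N (- X).
Proof. by move=> hX i j; rewrite !mxE; apply: dvdZinv_opp. Qed.

Definition congr_one (g : M) := mx_dvdZinv m N (g - 1).

Lemma congr_one_1 : congr_one 1.
Proof. by move=> i j; rewrite subrr mxE; exact: dvdZinv0. Qed.

Lemma congr_one_mul g h : congr_one g -> congr_one h -> entries_in m h -> congr_one (g * h).
Proof.
move=> hg hh hZ; rewrite /congr_one.
have -> : g * h - 1 = (g - 1) * h + (h - 1) by rewrite mulrBl mul1r addrA subrK.
by apply: mx_dvdZinv_add => //; apply: mx_dvdZinv_mulr.
Qed.

Lemma congr_one_X g k : congr_one g -> entries_in m g -> congr_one (g ^+ k).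
Proof.
move=> hg hZ; elim: k => [|k IH]; first by rewrite expr0; exact: congr_one_1.
by rewrite exprSr; apply: congr_one_mul.
Qed.

Lemma congr_one_conj g X Y : congr_one g -> entries_in m X -> entries_in m Y -> X * Y = 1 ->
  congr_one (X * g * Y).
Proof.
move=> hg hX hY e; rewrite /congr_one.
have -> : X * g * Y - 1 = X * (g - 1) * Y by rewrite mulrBr mulrBl mulr1 e.
by apply: mx_dvdZinv_mulr => //; apply: mx_dvdZinv_mull.
Qed.

Lemma congr_one_V g : g \is a GRing.unit -> congr_one g -> entries_in m g^-1 -> congr_one g^-1.
Proof.
move=> gu hg hZ; rewrite /congr_one.
have -> : g^-1 - 1 = - (g^-1 * (g - 1)) by rewrite mulrBr mulVr // mulr1 opprB.
by apply: mx_dvdZinv_opp; apply: mx_dvdZinv_mull.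
Qed.

End ZinvMatrices.

Section FiniteLevel.
Variables (m N' n : nat).
Local Notation N := N'.+1.
Hypotheses (m_gt0 : (0 < m)%N) (cNm : coprime N m).
Local Notation M := ('M[rat]_n.+1).

Definition reduction (X : M) : {ffun 'I_n.+1 * 'I_n.+1 -> 'I_N} :=
  [ffun ij => inord `|(residue m N (X ij.1 ij.2) %% N%:Z)%Z|%N].

Lemma reduction_eq (X Y : M) : entries_in m X -> entries_in m Y ->
  reduction X = reduction Y -> mx_dvdZinv m N (X - Y).
Proof.
move=> hX hY e i j.
have := congr1 (fun f : {ffun _ -> 'I_N} => val (f (i, j))) e; rewrite !ffunE /=.
have lt_mod r : (`|(r %% N%:Z)%Z|%N < N)%N.
  by rewrite -ltz_nat gez0_abs ?modz_ge0 // ltz_pmod.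
rewrite !inordK ?lt_mod // => /(congr1 Posz); rewrite !gez0_abs ?modz_ge0 // => /eqP.
rewrite eqz_mod_dvd => hd.
have -> : (X - Y) i j = (X i j - (residue m N (X i j))%:~R)
    - (Y i j - (residue m N (Y i j))%:~R) + (residue m N (X i j) - residue m N (Y i j))%:~R.
  by rewrite !mxE rmorphB /=; ring.
apply: dvdZinv_add => //; last exact: dvdZinv_intmul.
by apply: dvdZinv_sub => //; apply: residueP.
Qed.

(* Every element of GL_n(Z[1/m]) has finite order modulo N (pigeonhole on
   the finitely many reductions of its powers). *)
Lemma power_congr_one (X : M) : entries_in m X -> entries_in m X^-1 -> X \is a GRing.unit ->
  exists L, (0 < L)%N /\ congr_one m N (X ^+ L).
Proof.
move=> hX hXi Xu.
pose f (q : 'I_#|{ffun 'I_n.+1 * 'I_n.+1 -> 'I_N}|.+1) := reduction (X ^+ q).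
have /injectivePn [q1 [q2 hne hf]] : ~~ injectiveb f.
  by apply/negP => /injectiveP /leq_card; rewrite card_ord ltnn.
have gap_power a b : (a < b)%N -> mx_dvdZinv m N (X ^+ a - X ^+ b) ->
    exists L, (0 < L)%N /\ congr_one m N (X ^+ L).
  move=> ab hab; exists (b - a)%N; split; first by rewrite subn_gt0.
  rewrite /congr_one.
  have -> : X ^+ (b - a) - 1 = - ((X^-1) ^+ a * (X ^+ a - X ^+ b)).
    rewrite -{2}(subnKC (ltnW ab)) exprD mulrBr exprVn mulVr ?unitrX //.
    by rewrite mulrA mulVr ?unitrX // mul1r opprB.
  by apply: mx_dvdZinv_opp => //; apply: mx_dvdZinv_mull => //; exact: entries_in_X.
have hab := reduction_eq (entries_in_X m_gt0 q1 hX) (entries_in_X m_gt0 q2 hX) hf.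
case: (ltngtP q1 q2) => h; first exact: gap_power h hab.
  by apply: gap_power h _; rewrite -opprB; exact: mx_dvdZinv_opp.
by move: hne; rewrite (val_inj h) eqxx.
Qed.

End FiniteLevel.

Lemma coprime_part (m x : nat) : (0 < m)%N -> (0 < x)%N ->
  exists x' P s, [/\ x = (x' * P)%N, coprime x' m & (P %| m ^ s)%N].
Proof.
move=> m0; elim: x {-2}x (leqnn x) => [|b IH] x hx x0; first by move: hx x0; case: x.
case cxm: (coprime x m); first by exists x, 1%N, 0%N; rewrite muln1 expn0.
set g := gcdn x m.
have g1 : (1 < g)%N.
  move: cxm; rewrite /coprime -/g; have : (0 < g)%N by rewrite gcdn_gt0 x0.
  by case: g => [|[|g]].
set x1 := (x %/ g)%N.
have ex : x = (x1 * g)%N by rewrite divnK // dvdn_gcdl.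
have x1p : (0 < x1)%N by move: x0; rewrite ex muln_gt0 => /andP[].
have x1b : (x1 <= b)%N.
  by rewrite -ltnS (leq_trans _ hx) // ex -{1}(muln1 x1) ltn_pmul2l.
have [x' [P [s [e1 c1 d1]]]] := IH _ x1b x1p.
exists x', (P * g)%N, s.+1; split => //; first by rewrite ex e1 mulnA.
by rewrite expnSr dvdn_mul // dvdn_gcdr.
Qed.

Lemma PoszX (a b : nat) : (a ^ b)%N%:Z = a%:Z ^+ b.
Proof. by elim: b => [|b IH]; rewrite ?expr0 // expnS exprS PoszM IH. Qed.

(* If m^M + 1 divides m^k - sg with sg = ±1, then M divides k: modulo m^M + 1
   the powers m^b, 0 < b < M, are too small to be congruent to ±1. *)
Lemma power_congr_sign (m M k : nat) (sg : int) : (1 < m)%N -> (0 < M)%N ->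
  (sg = 1 \/ sg = -1) -> (((m ^ M)%N.+1)%:Z %| (m ^ k)%N%:Z - sg)%Z -> (M %| k)%N.
Proof.
move=> m1 M0 hsg /dvdzP[q hq].
set a := (k %/ M)%N; set b := (k %% M)%N.
have [b0|bpos] := posnP b; first by apply/dvdnP; exists a; rewrite (divn_eq k M) -/b b0 addn0.
set x : int := (m ^ M)%N%:Z; set mb : int := (m ^ b)%N%:Z.
have hmk : (m ^ k)%N%:Z = x ^+ a * mb.
  by rewrite (divn_eq k M) expnD [(_ * M)%N]mulnC expnM PoszM /x /mb !PoszX -exprM.
have [S hS] : exists S : int, x ^+ a - (-1) ^+ a = (x + 1) * S.
  by exists (\sum_(i < a) x ^+ (a.-1 - i) * (-1) ^+ i); rewrite subrXX opprK.
have mb2 : 2 <= mb by rewrite lez_nat (leq_trans m1) // -{1}(expn1 m) leq_exp2l.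
have mbx : mb + 1 <= x by rewrite -PoszD lez_nat addn1 ltn_exp2l // ltn_mod.
have sgn_a : ((-1) ^+ a = 1 :> int) \/ ((-1) ^+ a = -1 :> int).
  by rewrite -signr_odd; case: (odd a) => /=; [right|left]; rewrite ?expr1 ?expr0.
have key : (-1) ^+ a * mb - sg = (q - S * mb) * (x + 1).
  have hxa : x ^+ a = (-1) ^+ a + (x + 1) * S by rewrite -hS addrC subrK.
  move: hq; rewrite /x -addn1 PoszD -/x hmk hxa => hq.
  by rewrite mulrBl -hq; ring.
exfalso; set Q := q - S * mb in key.
have [hq1|hq1] := lerP 1 Q.
  have : (x + 1) <= Q * (x + 1) by rewrite ler_peMl // ltW //; lia.
  by case: sgn_a => -> in key; case: hsg => -> in key; lia.
have [hq2|hq2] := lerP Q (-1).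
  have : Q * (x + 1) <= - (x + 1) by rewrite -mulN1r ler_pM2r //; lia.
  by case: sgn_a => -> in key; case: hsg => -> in key; lia.
have Q0 : Q = 0 by lia.
by rewrite Q0 mul0r in key; case: sgn_a => -> in key; case: hsg => -> in key; lia.
Qed.

(* The affine action of BS(1,m) on Q (a : x |-> x + 1, t : x |-> m x) respects
   the defining relations; it shows that a^2 is nontrivial in BS(1,m).
   An affine map x |-> s x + c is encoded by the pair (s, c). *)
Section AffineModel.
Variable m : nat.
Hypothesis m_gt0 : (0 < m)%N.

Definition affine_comp (f g : rat * rat) : rat * rat := (f.1 * g.1, f.1 * g.2 + f.2).

Definition affine_letter (x : bool * bool) : rat * rat :=
  match x with
  | (false, false) => (1, 1)
  | (false, true) => (1, -1)
  | (true, false) => (m%:R, 0)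
  | (true, true) => (m%:R^-1, 0)
  end.

Definition affine_word (w : bsword) : rat * rat :=
  foldr (fun x acc => affine_comp (affine_letter x) acc) (1, 0) w.

Lemma affine_compA f g h : affine_comp f (affine_comp g h) = affine_comp (affine_comp f g) h.
Proof. by case: f g h => [s1 b1] [s2 b2] [s3 b3]; rewrite /affine_comp /=; congr pair; ring. Qed.

Lemma affine_word_cat u v : affine_word (u ++ v) = affine_comp (affine_word u) (affine_word v).
Proof.
elim: u => [|x u IH] /=; last by rewrite IH affine_compA.
by case: (affine_word v) => s b; rewrite /affine_comp /= !mul1r addr0.
Qed.

Lemma affine_word_eq u v : bs_eq m u v -> affine_word u = affine_word v.
Proof.
have hm : (m%:R : rat) != 0 by rewrite pnatr_eq0 -lt0n.
have affine_nseq k : affine_word (nseq k la) = (1, k%:R).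
  elim: k => [|k IH] //=; rewrite IH /affine_comp /=.
  by congr pair; rewrite mul1r -addn1 natrD.
have affine_rule x y : bs_rule m x y -> affine_word x = affine_word y.
  case=> [[[] [-> ->]]|[[[] [-> ->]]|[-> ->]]];
    rewrite ?affine_nseq /= /affine_comp /=; congr pair; field; exact: hm.
elim=> [x y [p [s [x' [y' [hr [-> ->]]]]]]|//|//|x y z _ -> _ //].
by rewrite !affine_word_cat (affine_rule _ _ hr).
Qed.

Lemma aa_neq_nil : ~ bs_eq m [:: la; la] [::].
Proof.
move=> /affine_word_eq; rewrite /= /affine_comp /= => /(congr1 snd) /=.
by rewrite mulr0 add0r !mulr1; lra.
Qed.

End AffineModel.

Lemma conj_exprn (R : unitRingType) (V X : R) (j : nat) : V \is a GRing.unit ->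
  V * X ^+ j * V^-1 = (V * X * V^-1) ^+ j.
Proof.
move=> Vu; elim: j => [|j IH]; first by rewrite !expr0 mulr1 divrr.
by rewrite [RHS]exprSr -IH !mulrA divrK // exprSr mulrA.
Qed.

Lemma conj_exprz (R : unitRingType) (V X : R) (z : int) :
  V \is a GRing.unit -> X \is a GRing.unit -> V * X ^ z * V^-1 = (V * X * V^-1) ^ z.
Proof.
move=> Vu Xu; case: z => j; first by rewrite -!exprnP conj_exprn.
rewrite NegzE -!exprnN -conj_exprn //.
have u1 : V * X ^+ j.+1 \is a GRing.unit by rewrite unitrMr ?unitrX.
by rewrite (invrM u1) ?unitrV // invrK (invrM Vu) ?unitrX // mulrA.
Qed.

Lemma comm_exprn (R : ringType) (a b c : R) (j : nat) : a * b = c * a -> a * b ^+ j = c ^+ j * a.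
Proof.
move=> e; elim: j => [|j IH]; first by rewrite !expr0 mulr1 mul1r.
by rewrite exprSr mulrA IH -mulrA e mulrA -exprSr.
Qed.

Lemma sqr_exprz_eq1 (y : rat) (z : int) : y ^+ 2 = 1 -> (y ^ z) ^+ 2 = 1.
Proof. by move=> h; rewrite exprnP exprzAC -exprnP h exp1rz. Qed.

Section UpperTriangular.
Variable n : nat.
Local Notation M := ('M[rat]_n.+1).

Lemma upper_tri1 : upper_tri (1 : M).
Proof. by move=> i j ji; rewrite one_entry; case: eqP => // e; move: ji; rewrite e ltnn. Qed.

Lemma upper_tri_mul (X Y : M) : upper_tri X -> upper_tri Y -> upper_tri (X * Y).
Proof.
move=> hX hY i j ji; rewrite mulmx_entry big1 // => k _.
have [ki|ik] := ltnP k i; first by rewrite hX // mul0r.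
by rewrite hY ?mulr0 // (leq_trans ji ik).
Qed.

Lemma upper_tri_X (X : M) k : upper_tri X -> upper_tri (X ^+ k).
Proof.
move=> h; elim: k => [|k IH]; first by rewrite expr0; exact: upper_tri1.
by rewrite exprS; exact: upper_tri_mul.
Qed.

Lemma upper_tri_exprz (X : M) (z : int) : upper_tri X -> upper_tri X^-1 -> upper_tri (X ^ z).
Proof.
move=> h1 h2; case: z => j; first by rewrite -exprnP; exact: upper_tri_X.
by rewrite NegzE -exprnN -exprVn; exact: upper_tri_X.
Qed.

Lemma diag_mul (X Y : M) i : upper_tri X -> upper_tri Y -> (X * Y) i i = X i i * Y i i.
Proof.
move=> hX hY; rewrite mulmx_entry (bigD1 i) //= big1 ?addr0 // => k ki.
case: (ltngtP k i) => h; first by rewrite hX // mul0r.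
  by rewrite hY // mulr0.
by move: ki; rewrite (val_inj h) eqxx.
Qed.

Lemma diag_X (X : M) i k : upper_tri X -> (X ^+ k) i i = X i i ^+ k.
Proof.
move=> h; elim: k => [|k IH]; first by rewrite !expr0 one_entry eqxx.
by rewrite !exprS diag_mul ?IH //; exact: upper_tri_X.
Qed.

Lemma diag_inv (X : M) i : upper_tri X -> upper_tri X^-1 -> X \is a GRing.unit ->
  X^-1 i i = (X i i)^-1 /\ X i i != 0.
Proof.
move=> h1 h2 u.
have e : X i i * X^-1 i i = 1 by rewrite -diag_mul // mulrV // one_entry eqxx.
have nz : X i i != 0 by apply: contra_eq_neq e => ->; rewrite mul0r eq_sym oner_neq0.
by split => //; apply: (mulfI nz); rewrite e mulfV.
Qed.

Lemma diag_exprz (X : M) (z : int) i : upper_tri X -> upper_tri X^-1 -> X \is a GRing.unit ->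
  (X ^ z) i i = (X i i) ^ z.
Proof.
move=> h1 h2 u; case: z => j; first by rewrite -!exprnP diag_X.
by rewrite NegzE -!exprnN -exprVn diag_X // (diag_inv i h1 h2 u).1 exprVn.
Qed.

End UpperTriangular.

(* A finite-index subgroup H of a group G of matrices contains the D-th power
   of every element of G, for D = r! where r is the number of cosets: among
   g^0, ..., g^r two lie in the same coset, so some g^e (0 < e <= r) is in H. *)
Section FiniteIndexPowers.
Variables (n : nat) (G H : 'M[rat]_n.+1 -> Prop).
Hypotheses (G1 : G 1) (G_mul : forall g h, G g -> G h -> G (g * h))
  (G_unit : forall g, G g -> g \is a GRing.unit).
Hypotheses (subH : is_subgroup_of G H) (finH : finite_index_in G H).

Lemma subgroup_X g k : H g -> H (g ^+ k).
Proof.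
case: subH => [_ H1 HM _] hg; elim: k => [|k IH]; first by rewrite expr0.
by rewrite exprS -mulmxE; apply: HM.
Qed.

Lemma same_coset_power g c a b k : G c -> (a < b <= k)%N ->
  (exists2 h1, H h1 & g ^+ a = c * h1) -> (exists2 h2, H h2 & g ^+ b = c * h2) ->
  H (g ^+ k`!).
Proof.
case: subH => [HG _ HM HV] Gc /andP[ab bk] [h1 Hh1 e1] [h2 Hh2 e2].
have [u0 u1] : c \is a GRing.unit /\ h1 \is a GRing.unit by split; [exact: G_unit | apply/G_unit/HG].
have e3 : g ^+ (b - a) = h1^-1 * h2.
  have : c * h1 * g ^+ (b - a) = c * h2 by rewrite -e1 -e2 -exprD subnKC // ltnW.
  by rewrite -mulrA => /(mulrI u0) <-; rewrite mulKr.
have Hd : H (g ^+ (b - a)) by rewrite e3 -mulmxE; apply: HM => //; exact: HV.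
have dv : ((b - a) %| k`!)%N.
  by apply: dvdn_fact; rewrite subn_gt0 ab (leq_trans (leq_subr _ _) bk).
by rewrite -(divnK dv) mulnC exprM; apply: subgroup_X.
Qed.

Lemma finite_index_powers : exists D, (0 < D)%N /\ forall g, G g -> H (g ^+ D).
Proof.
case: finH => [s [hs1 hs2]].
have G_X g k : G g -> G (g ^+ k).
  by move=> hg; elim: k => [|k IH]; rewrite ?expr0 // exprS; apply: G_mul.
have [g0 g0s _] := hs2 1 G1.
set r := size s.
have r0 : (0 < r)%N by rewrite /r; case: (s) g0s.
exists r`!; split => [|g Gg]; first exact: fact_gt0.
pose P k c := c \in s /\ exists2 h, H h & g ^+ k = c * h.
pose coset k := epsilon (inhabits 1) (P k).
have cosetP k : P k (coset k).
  apply: epsilon_spec; have [c cs [h Hh e]] := hs2 _ (G_X g k Gg).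
  by exists c; split => //; exists h; rewrite -?mulmxE.
pose f (k : 'I_r.+1) : 'I_r.-1.+1 := inord (index (coset k) s).
have /injectivePn [k1 [k2 hne hf]] : ~~ injectiveb f.
  by apply/negP => /injectiveP /leq_card; rewrite !card_ord prednK // ltnn.
have index_coset (k : 'I_r.+1) : f k = index (coset k) s :> nat.
  by rewrite /f inordK // prednK // index_mem; case: (cosetP k).
have ek : coset k1 = coset k2.
  have [i1 _] := cosetP k1; have [i2 _] := cosetP k2.
  by rewrite -(nth_index 1 i1) -(nth_index 1 i2) -!index_coset hf.
have Gc : G (coset k1) by apply: hs1; case: (cosetP k1).
have [_ c1] := cosetP k1; have [_ c2] := cosetP k2; rewrite -ek in c2.
case: (ltngtP k1 k2) => h.
- by apply: (same_coset_power Gc _ c1 c2); rewrite h /= -ltnS.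
- by apply: (same_coset_power Gc _ c2 c1); rewrite h /= -ltnS.
- by move: hne; rewrite (val_inj h) eqxx.
Qed.

End FiniteIndexPowers.

(* An element of the unit group of Z[1/m] congruent to 1 modulo (m^M + 1) N is
   ± m^k with M | k; applied to the ratio of two diagonal entries. *)
Lemma ratio_congr_exponent (m M N k : nat) (gi gj s : rat) : (1 < m)%N -> (0 < M)%N ->
  (0 < N)%N -> coprime ((m ^ M).+1 * N) m -> (s = 1 \/ s = -1) -> gi = s * m%:R ^+ k * gj ->
  dvdZinv m ((m ^ M).+1 * N) (gi - 1) -> dvdZinv m ((m ^ M).+1 * N) (gj - 1) -> (M %| k)%N.
Proof.
move=> m1 M0 N0 cop hs e hi hj.
have m0 : (0 < m)%N by apply: leq_trans m1.
have [sg [esg hsg]] : exists sg : int, s = sg%:~R /\ (sg = 1 \/ sg = -1).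
  by case: hs => ->; [exists 1 | exists (-1)]; split; auto.
have hZs : inZinv m (s * m%:R ^+ k).
  by rewrite esg; apply: inZinv_mul => //; [exact: inZinv_int | exact: inZinv_expm].
have h1 : dvdZinv m ((m ^ M).+1 * N) (s * m%:R ^+ k - 1).
  have -> : s * m%:R ^+ k - 1 = (gi - 1) - s * m%:R ^+ k * (gj - 1) by rewrite e; ring.
  by apply: dvdZinv_sub => //; apply: dvdZinv_mull.
have h2 : dvdZinv m (m ^ M).+1 (s * m%:R ^+ k - 1).
  by apply: dvdZinv_dvd h1 => //; [exact: dvdn_mulr | rewrite muln_gt0 N0].
have cop1 : coprime (m ^ M).+1 m by move: cop; rewrite coprimeMl => /andP[].
have h3 : ((m ^ M).+1%:Z %| sg * (m ^ k)%N%:Z - 1)%Z.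
  apply: (dvdZinv_int m0) => //.
  by move: h2; rewrite esg -intr_expn -intrM -[1]/(1%:~R) -intrB.
apply: (power_congr_sign m1 M0 hsg).
have -> : (m ^ k)%N%:Z - sg = sg * (sg * (m ^ k)%N%:Z - 1) by case: hsg => ->; ring.
exact: dvdz_mull.
Qed.

(* The diagonal of a normal form T^-p A^z T^q at two positions i, j, when the
   diagonal of A consists of signs and T_ii = m T_jj: the entries differ by a
   sign and the factor m^|q - p|. *)
Lemma diag_ratio (li lj mi mj mm : rat) (p q : nat) (z : int) :
  lj != 0 -> mm != 0 -> li = mm * lj -> mi ^+ 2 = 1 -> mj ^+ 2 = 1 ->
  ((p <= q)%N -> (li ^+ p)^-1 * mi ^ z * li ^+ q =
      (mi * mj) ^ z * mm ^+ (q - p) * ((lj ^+ p)^-1 * mj ^ z * lj ^+ q)) /\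
  ((q < p)%N -> (lj ^+ p)^-1 * mj ^ z * lj ^+ q =
      (mi * mj) ^ z * mm ^+ (p - q) * ((li ^+ p)^-1 * mi ^ z * li ^+ q)).
Proof.
move=> hlj hmm hli hmi hmj.
have ha := sqr_exprz_eq1 z hmi; have hb := sqr_exprz_eq1 z hmj.
rewrite expfzMl; set a := mi ^ z; set b := mj ^ z.
split => h.
  have [k ->] : exists k, q = (p + k)%N by exists (q - p)%N; rewrite subnKC.
  rewrite addKn.
  transitivity (b ^+ 2 * ((li ^+ p)^-1 * a * li ^+ (p + k))); first by rewrite hb mul1r.
  by rewrite hli !exprD !exprMn; field; rewrite ?expf_neq0 ?mulf_neq0 ?hlj ?hmm.
have [k ->] : exists k, p = (q + k)%N by exists (p - q)%N; rewrite subnKC // ltnW.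
rewrite addKn.
transitivity (a ^+ 2 * ((lj ^+ (q + k))^-1 * b * lj ^+ q)); first by rewrite ha mul1r.
by rewrite hli !exprD !exprMn; field; rewrite ?expf_neq0 ?mulf_neq0 ?hlj ?hmm.
Qed.

Definition dvd_shift (k p q : nat) : Prop :=
  ((p <= q)%N /\ (k %| q - p)%N) \/ ((q < p)%N /\ (k %| p - q)%N).

Lemma dvd_shift_trans k k' p q : (k %| k')%N -> dvd_shift k' p q -> dvd_shift k p q.
Proof. by move=> kk' [[pq h]|[qp h]]; [left|right]; split => //; exact: dvdn_trans h. Qed.

Section Representation.
Variables (m n : nat) (rho : bsword -> 'M[rat]_n.+1).
Hypotheses (m_ge2 : (2 <= m)%N) (rho_hom : bs_hom m rho)
  (rho_Tn : forall w, in_Tn m (rho w)).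

Fact m_gt0 : (0 < m)%N. Proof. exact: leq_trans m_ge2. Qed.
Local Hint Resolve m_gt0 : core.

Lemma rho_nil : rho [::] = 1.
Proof. by case: rho_hom => h _ _; rewrite h idmxE. Qed.

Lemma rho_cat u v : rho (u ++ v) = rho u * rho v.
Proof. by case: rho_hom => _ h _; rewrite h mulmxE. Qed.

Lemma rho_unit w : rho w \is a GRing.unit. Proof. by case: (rho_Tn w). Qed.
Lemma rho_entries w : entries_in m (rho w). Proof. by case: (rho_Tn w). Qed.
Lemma rho_entriesV w : entries_in m (rho w)^-1. Proof. by case: (rho_Tn w). Qed.
Lemma rho_upper w : upper_tri (rho w). Proof. by case: (rho_Tn w). Qed.

Lemma rho_rule x y : bs_rule m x y -> rho x = rho y.
Proof.
case: rho_hom => _ _ h hr; apply/h/rst_step.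
by exists [::], [::], x, y; rewrite /= !cats0.
Qed.

Definition A := rho [:: la].
Definition T := rho [:: lt].

Lemma A_unit : A \is a GRing.unit. Proof. exact: rho_unit. Qed.
Lemma T_unit : T \is a GRing.unit. Proof. exact: rho_unit. Qed.
Local Hint Resolve A_unit T_unit : core.

Lemma rho_inv_letter g : rho [:: (g, true)] = (rho [:: (g, false)])^-1.
Proof.
have e : rho [:: (g, false)] * rho [:: (g, true)] = 1.
  by rewrite -rho_cat -rho_nil; apply: rho_rule; left; exists g.
by rewrite -[LHS](mulKr (rho_unit [:: (g, false)])) e mulr1.
Qed.

Lemma rho_laI : rho [:: laI] = A^-1. Proof. exact: (rho_inv_letter false). Qed.
Lemma rho_ltI : rho [:: ltI] = T^-1. Proof. exact: (rho_inv_letter true). Qed.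

Lemma rho_nseq k x : rho (nseq k x) = rho [:: x] ^+ k.
Proof.
elim: k => [|k IH]; first by rewrite rho_nil expr0.
by rewrite exprS -IH -rho_cat.
Qed.

Lemma T_A_Tinv : T * A * T^-1 = A ^+ m.
Proof. by rewrite -rho_ltI /A -rho_nseq -!rho_cat; apply: rho_rule; right; right. Qed.

Lemma T_A : T * A = A ^+ m * T.
Proof. by rewrite -T_A_Tinv divrK. Qed.

Lemma conj_Tpow_A p : T ^+ p * A * (T ^+ p)^-1 = A ^+ (m ^ p).
Proof.
elim: p => [|p IH]; first by rewrite expr0 invr1 mul1r mulr1 expn0 expr1.
rewrite exprS invrM ?unitrX // !mulrA -(mulrA _ _ A) -(mulrA _ (T ^+ p * A)) IH.
by rewrite conj_exprn // T_A_Tinv -exprM expnS.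
Qed.

Lemma conj_Tpow_Az p (z : int) : T ^+ p * A ^ z * (T ^+ p)^-1 = A ^ ((m ^ p)%N%:Z * z).
Proof. by rewrite conj_exprz ?unitrX // conj_Tpow_A exprnP exprz_exp. Qed.

Lemma Az_conj p (z : int) : A ^ z = (T ^+ p)^-1 * A ^ ((m ^ p)%N%:Z * z) * T ^+ p.
Proof. by rewrite -conj_Tpow_Az !mulrA mulVr ?unitrX // mul1r divrK ?unitrX. Qed.

Definition zword (z : int) : bsword :=
  match z with Posz j => nseq j la | Negz j => nseq j.+1 laI end.

Lemma rho_zword z : rho (zword z) = A ^ z.
Proof.
case: z => j; rewrite /zword rho_nseq; first by rewrite -exprnP.
by rewrite rho_laI NegzE -exprnN exprVn.
Qed.

Definition normal_form p (z : int) q := (T ^+ p)^-1 * A ^ z * T ^+ q.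

Lemma Tpow_image p : bs_image rho (T ^+ p).
Proof. by exists (nseq p lt); rewrite rho_nseq. Qed.

Lemma Tpow_inv_image p : bs_image rho (T ^+ p)^-1.
Proof. by exists (nseq p ltI); rewrite rho_nseq rho_ltI exprVn. Qed.

Lemma normal_form_image p z q : bs_image rho (normal_form p z q).
Proof.
exists (nseq p ltI ++ zword z ++ nseq q lt).
by rewrite !rho_cat !rho_nseq rho_zword rho_ltI -/T exprVn mulrA.
Qed.

(* Every element of the image has a normal form: induction on the word,
   pushing each letter through T^-p using the relation. *)
Lemma image_normal_form w : exists p q z, rho w = normal_form p z q.
Proof.
elim: w => [|x w [p [q [z IH]]]].
  by exists 0%N, 0%N, 0; rewrite rho_nil /normal_form !expr0 expr0z invr1 !mul1r.
have Tpu : T ^+ p \is a GRing.unit by rewrite unitrX.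
rewrite -cat1s rho_cat IH /normal_form.
case: x => [[] []].
- by exists p.+1, q, z; rewrite rho_ltI -/T exprSr invrM // !mulrA.
- case: p Tpu {IH} => [|p] Tpu.
    exists 0%N, q.+1, ((m ^ 1)%N%:Z * z).
    by rewrite -/T expr0 invr1 !mul1r -(conj_Tpow_Az 1 z) expr1 exprS !mulrA divrK.
  by exists p, q, z; rewrite -/T exprSr invrM ?unitrX // !mulrA mulrV // mul1r.
- exists p, q, ((m ^ p)%N%:Z * (-1) + z).
  by rewrite rho_laI -exprN1 (Az_conj p) !mulrA mulrK // exprzDr // !mulrA.
- exists p, q, ((m ^ p)%N%:Z * 1 + z).
  by rewrite -/A -{1}(expr1z A) (Az_conj p) !mulrA mulrK // exprzDr // !mulrA.
Qed.

Lemma upper_A : upper_tri A. Proof. exact: rho_upper. Qed.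
Lemma upper_T : upper_tri T. Proof. exact: rho_upper. Qed.
Lemma upper_AV : upper_tri A^-1. Proof. by rewrite -rho_laI; exact: rho_upper. Qed.
Lemma upper_TV : upper_tri T^-1. Proof. by rewrite -rho_ltI; exact: rho_upper. Qed.

Lemma entries_Tpow p : entries_in m (T ^+ p).
Proof. by case: (Tpow_image p) => w ->; exact: rho_entries. Qed.

Lemma entries_Tpow_inv p : entries_in m (T ^+ p)^-1.
Proof. by case: (Tpow_inv_image p) => w ->; exact: rho_entries. Qed.

Lemma upper_Tpow_inv p : upper_tri (T ^+ p)^-1.
Proof. by case: (Tpow_inv_image p) => w ->; exact: rho_upper. Qed.

Lemma diag_T_neq0 i : T i i != 0.
Proof. exact: (diag_inv i upper_T upper_TV T_unit).2. Qed.

(* The diagonal of A consists of signs: comparing diagonals in T A = A^m T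
   gives A_ii^(m-1) = 1 in Q. *)
Lemma diag_A_sqr i : A i i ^+ 2 = 1.
Proof.
have e : (T * A) i i = (A ^+ m * T) i i by rewrite T_A.
rewrite (diag_mul i upper_T upper_A) (diag_mul i (upper_tri_X m upper_A) upper_T) in e.
rewrite (diag_X i m upper_A) in e.
have [_ nzA] := diag_inv i upper_A upper_AV A_unit.
have e1 : A i i ^+ m.-1 = 1.
  apply: (mulIf nzA); rewrite mul1r -exprSr prednK //.
  by apply: (mulIf (diag_T_neq0 i)); rewrite -e mulrC.
have e2 : `|A i i| = 1.
  have m1_gt0 : (0 < m.-1)%N by rewrite -subn1 subn_gt0.
  by apply/eqP; rewrite -(@pexpr_eq1 _ _ m.-1) ?normr_ge0 // -normrX e1 normr1.
by rewrite -real_normK ?num_real // e2 expr1n.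
Qed.

Lemma diag_normal_form p z q i :
  (normal_form p z q) i i = (T i i ^+ p)^-1 * (A i i) ^ z * T i i ^+ q.
Proof.
have uz : upper_tri (A ^ z) by apply: upper_tri_exprz; [exact: upper_A | exact: upper_AV].
rewrite /normal_form.
rewrite (diag_mul i (upper_tri_mul (upper_Tpow_inv p) uz) (upper_tri_X q upper_T)).
rewrite (diag_mul i (upper_Tpow_inv p) uz) (diag_X i q upper_T).
rewrite (diag_exprz z i upper_A upper_AV A_unit).
rewrite (diag_inv i (upper_tri_X p upper_T) (upper_Tpow_inv p) _).1 ?unitrX //.
by rewrite (diag_X i p upper_T).
Qed.


Lemma normal_form_pow p z D : (normal_form p z p) ^+ D = normal_form p (z * D%:Z) p.
Proof.
rewrite /normal_form -{2}(invrK (T ^+ p)) -conj_exprn ?unitrV ?unitrX //.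
by rewrite invrK exprnP exprz_exp.
Qed.

Lemma normal_form_shift p s z :
  normal_form (p + s) (z * (m ^ s)%N%:Z) (p + s) = normal_form p z p.
Proof.
rewrite /normal_form (mulrC z) -(conj_Tpow_Az s z) addnC exprD invrM ?unitrX //.
by rewrite !mulrA !divrK ?unitrX.
Qed.

Lemma normal_form_mulT p z k : normal_form p z p * T ^+ k = normal_form p z (p + k).
Proof. by rewrite /normal_form -mulrA -exprD. Qed.

Lemma normal_form_mulTV q z k :
  normal_form (q + k) z (q + k) * (T ^+ k)^-1 = normal_form (q + k) z q.
Proof. by rewrite /normal_form -mulrA exprD mulrK ?unitrX. Qed.

(* If T^L = 1 mod N and L | q - p, then T^-p A^z T^q = 1 mod N forces
   A^z = 1 mod N: conjugate by T^p and remove the factor T^(q-p). *)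
Lemma congr_A_of_normal_form N p q z L : congr_one m N (T ^+ L) ->
  dvd_shift L p q ->
  congr_one m N (normal_form p z q) -> congr_one m N (A ^ z).
Proof.
move=> hL hcase hg.
have Tpu : T ^+ p \is a GRing.unit by rewrite unitrX.
have hTk k : (L %| k)%N -> congr_one m N (T ^+ k).
  by move=> /dvdnP[a ->]; rewrite mulnC exprM; apply: congr_one_X => //; exact: entries_Tpow.
have h : congr_one m N (A ^ z * (T ^+ q * (T ^+ p)^-1)).
  have -> : A ^ z * (T ^+ q * (T ^+ p)^-1) = T ^+ p * normal_form p z q * (T ^+ p)^-1.
    by rewrite /normal_form !mulrA mulrV // mul1r.
  apply: congr_one_conj => //; [exact: entries_Tpow | exact: entries_Tpow_inv | exact: mulrV].
have [W [hW entW eW]] : exists W, [/\ congr_one m N W, entries_in m W &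
    (T ^+ q * (T ^+ p)^-1) * W = 1].
  case: hcase => [[pq dq]|[qp dp]].
    have Tku : T ^+ (q - p) \is a GRing.unit by rewrite unitrX.
    exists (T ^+ (q - p))^-1; split; last by rewrite -{1}(subnK pq) exprD mulrK // mulrV.
    - by apply: congr_one_V => //; [exact: hTk | exact: entries_Tpow_inv].
    - exact: entries_Tpow_inv.
  exists (T ^+ (p - q)); split; [exact: hTk | exact: entries_Tpow |].
  rewrite -{1}(subnK (ltnW qp)) exprD invrM ?unitrX // mulrA mulrV ?unitrX // mul1r.
  by rewrite mulVr // unitrX.
rewrite -[A ^ z]mulr1 -eW mulrA.
exact: congr_one_mul.
Qed.

(* A normal form whose exponents are divisible by the m-free part D' of D
   (for a) and by D (for t) is a product of D-th powers, hence lies in every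
   subgroup containing all D-th powers. *)
Lemma normal_form_in_subgroup (H : 'M[rat]_n.+1 -> Prop) D D' P s p q z :
  is_subgroup_of (bs_image rho) H -> (forall g, bs_image rho g -> H (g ^+ D)) ->
  D = (D' * P)%N -> (P %| m ^ s)%N -> (D' %| `|z|)%N ->
  dvd_shift D p q ->
  H (normal_form p z q).
Proof.
move=> [_ _ HM _] HD eD dP dz hcase.
have [w ew] : exists w : int, z * (m ^ s)%N%:Z = w * D%:Z.
  exists ((z * (m ^ s)%N%:Z) %/ D%:Z)%Z; rewrite divzK // dvdzE abszM /=.
  by rewrite eD dvdn_mul.
have Hpp : H (normal_form p z p).
  by rewrite -(normal_form_shift p s) ew -normal_form_pow; apply/HD/normal_form_image.
case: hcase => [[pq dk]|[qp dk]].
  rewrite -(subnKC pq) -normal_form_mulT -mulmxE; apply: HM => //.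
  by rewrite -(divnK dk) exprM; apply/HD/Tpow_image.
rewrite -(subnKC (ltnW qp)) -normal_form_mulTV -mulmxE; apply: HM.
  by rewrite (subnKC (ltnW qp)).
by rewrite -(divnK dk) exprM -exprVn; apply/HD/Tpow_inv_image.
Qed.

(* Faithfulness enters only here: U = A^2 is a nontrivial unipotent matrix. *)
Hypothesis rho_inj : bs_injective m rho.

Definition U := A ^+ 2.
Definition Y := U - 1.

Lemma U_neq1 : U != 1.
Proof.
apply/eqP => e; apply: (aa_neq_nil m_gt0); apply: rho_inj.
by rewrite rho_nil -e /U expr2 -rho_cat.
Qed.

Lemma upper_U : upper_tri U. Proof. exact: upper_tri_X upper_A. Qed.

Lemma Y_lower (k l : 'I_n.+1) : (l <= k)%N -> Y k l = 0.
Proof.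
rewrite leq_eqVlt => /orP[/eqP/val_inj ->|lk].
  by rewrite sub_entry one_entry /U (diag_X _ _ upper_A) diag_A_sqr eqxx subrr.
rewrite sub_entry one_entry upper_U // (_ : k == l = false) ?subrr //.
by apply/eqP => e; move: lk; rewrite e ltnn.
Qed.

Lemma entries_Y : entries_in m Y.
Proof.
by apply: entries_in_sub => //; [rewrite /U expr2; apply: entries_in_mul => //;
  exact: rho_entries | exact: entries_in1].
Qed.

Definition band_zero (X : 'M[rat]_n.+1) (d : nat) :=
  forall k l : 'I_n.+1, (l - k < d)%N -> X k l = 0.

Lemma band_zero_mul (X Z : 'M[rat]_n.+1) d : band_zero X d -> band_zero Z d ->
  band_zero (X * Z) (d + d).
Proof.
move=> hX hZ k l lk; rewrite mulmx_entry big1 // => o _.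
have [h1|h1] := ltnP (o - k) d; first by rewrite hX // mul0r.
by rewrite hZ ?mulr0 //; lia.
Qed.

Lemma lowest_band_entry : exists (i j : 'I_n.+1) (d : nat),
  [/\ Y i j != 0, (j - i)%N = d, (0 < d)%N & band_zero Y d].
Proof.
have /existsP[[i0 j0] /= h0] : [exists ij : 'I_n.+1 * 'I_n.+1, Y ij.1 ij.2 != 0].
  have : Y != 0 by rewrite subr_eq0 U_neq1.
  apply: contraR => /existsPn h; apply/eqP/matrixP => k l; rewrite [RHS]mxE.
  by move: (h (k, l)); rewrite negbK => /eqP.
pose P d := [exists ij : 'I_n.+1 * 'I_n.+1, (Y ij.1 ij.2 != 0) && (ij.2 - ij.1 == d)%N].
have exP : exists d, P d by exists (j0 - i0)%N; apply/existsP; exists (i0, j0); rewrite h0 /=.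
case: (ex_minnP exP) => d /existsP[[i j] /= /andP[h /eqP e]] dmin.
exists i, j, d; split => //.
  by rewrite -e subn_gt0 ltnNge; apply: contra h => ji; rewrite Y_lower.
move=> k l lk; apply/eqP; apply: contraTT lk => hk; rewrite -leqNgt; apply: dmin.
by apply/existsP; exists (k, l); rewrite /= hk eqxx.
Qed.

Section LowestBandEntry.
Variables (i j : 'I_n.+1) (d : nat).
Hypotheses (Yij_neq0 : Y i j != 0) (dist_ij : (j - i)%N = d) (d_gt0 : (0 < d)%N)
  (Y_band : band_zero Y d).

Lemma U_pow_entry y : band_zero (U ^+ y - 1) d /\ (U ^+ y - 1) i j = y%:R * Y i j.
Proof.
elim: y => [|y [band e1]]; first by rewrite expr0 subrr; split => [k l _|]; rewrite mxE ?mul0r.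
have e : U ^+ y.+1 - 1 = (U ^+ y - 1) * Y + (U ^+ y - 1) + Y.
  by rewrite /Y mulrBr mulr1 subrK mulrBl mul1r -exprSr addrA subrK.
have band2 := band_zero_mul band Y_band.
rewrite e; split => [k l lk|].
  by rewrite 2!add_entry Y_band // band // band2 ?addr0 //; lia.
rewrite 2!add_entry e1 band2; last by lia.
by rewrite -[y.+1]addn1 natrD mulrDl mul1r add0r.
Qed.

(* Comparing the (i,j) entries of T U = U^m T gives T_ii = m T_jj. *)
Lemma T_diag_ratio : T i i = m%:R * T j j.
Proof.
have TY : (T * Y) i j = T i i * Y i j.
  rewrite mulmx_entry (bigD1 i) //= big1 ?addr0 // => o oi.
  case: (ltngtP o i) => h; first by rewrite upper_T // mul0r.
    by rewrite Y_band ?mulr0 //; lia.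
  by move: oi; rewrite (val_inj h) eqxx.
have ZT Z : band_zero Z d -> (Z * T) i j = Z i j * T j j.
  move=> bZ; rewrite mulmx_entry (bigD1 j) //= big1 ?addr0 // => o oj.
  case: (ltngtP o j) => h; first by rewrite bZ ?mul0r //; lia.
    by rewrite upper_T // mulr0.
  by move: oj; rewrite (val_inj h) eqxx.
have [bandm em] := U_pow_entry m.
have h : (T * U) i j = (U ^+ m * T) i j by rewrite /U (comm_exprn 2 T_A) exprAC.
have eU : U = Y + 1 by rewrite /Y subrK.
rewrite {1}eU -[U ^+ m](subrK 1) mulrDr mulrDl mulr1 mul1r 2!add_entry in h.
move: h; rewrite TY (ZT _ bandm) em => /addIr h.
by apply: (mulIf Yij_neq0); rewrite h; ring.
Qed.

(* If T^-p A^z T^q = 1 mod (m^M + 1) N, the diagonal entries at i and j differ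
   by ± m^(q-p), so M divides q - p. *)
Lemma normal_form_T_exponent M N p q z : (0 < M)%N -> (0 < N)%N ->
  coprime ((m ^ M).+1 * N) m -> congr_one m ((m ^ M).+1 * N) (normal_form p z q) ->
  dvd_shift M p q.
Proof.
move=> M0 N0 cop cg.
have gi := cg i i; have gj := cg j j.
rewrite sub_entry one_entry eqxx diag_normal_form in gi.
rewrite sub_entry one_entry eqxx diag_normal_form in gj.
have [rel_le rel_gt] := diag_ratio p q z (diag_T_neq0 j) (expr_natm_neq0 m_gt0 1)
  T_diag_ratio (diag_A_sqr i) (diag_A_sqr j).
have hs : (A i i * A j j) ^ z = 1 \/ (A i i * A j j) ^ z = -1.
  have : ((A i i * A j j) ^ z) ^+ 2 = 1.
    by apply: sqr_exprz_eq1; rewrite exprMn !diag_A_sqr mulr1.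
  by move/eqP; rewrite sqrf_eq1 => /orP[] /eqP; [left | right].
have [pq|qp] := leqP p q; [left|right]; split => //.
  exact: (ratio_congr_exponent _ M0 N0 cop hs (rel_le pq) gi gj).
exact: (ratio_congr_exponent _ M0 N0 cop hs (rel_gt qp) gj gi).
Qed.

(* If A^z = 1 mod N then N | |z| Y_ij in Z[1/m]; writing Y_ij = c0 / m^e with
   |c0| = K P2, P2 | m^s, and N = D' K with D' coprime to m, this gives D' | z. *)
Lemma A_exponent_divisible (c0 : int) e K P2 s D' z :
  Y i j = c0%:~R / m%:R ^+ e -> `|c0|%N = (K * P2)%N -> (P2 %| m ^ s)%N ->
  (0 < D' * K)%N -> coprime (D' * K) m -> congr_one m (D' * K) (A ^ z) -> (D' %| `|z|)%N.
Proof.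
move=> eY eC dP2 N0 cop hz.
have hA : congr_one m (D' * K) (A ^+ `|z|).
  case: z hz => y hz; first by rewrite -exprnP in hz.
  have -> : A ^+ `|Negz y| = (A ^ Negz y)^-1 by rewrite NegzE -exprnN invrK.
  apply: congr_one_V => //; first exact: unitrXz.
  by rewrite NegzE -exprnN invrK; apply: entries_in_X => //; exact: rho_entries.
have hU : congr_one m (D' * K) (U ^+ `|z|).
  by rewrite /U exprAC; apply: congr_one_X => //; apply: entries_in_X => //; exact: rho_entries.
have [_ ez] := U_pow_entry `|z|.
have hzc : dvdZinv m (D' * K) ((`|z| * c0)%:~R).
  have -> : (`|z| * c0)%:~R = (U ^+ `|z| - 1) i j * m%:R ^+ e :> rat.
    by rewrite ez eY intrM -mulrA divfK ?expr_natm_neq0.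
  by apply: dvdZinv_mulr => //; exact: inZinv_expm.
have := dvdZinv_int m_gt0 N0 cop hzc; rewrite dvdzE abszM /= eC.
have -> : (`|z| * (K * P2) = (`|z| * P2) * K)%N by ring.
rewrite dvdn_pmul2r; last by move: N0; rewrite muln_gt0 => /andP[].
have cDm : coprime D' (m ^ s) by apply: coprimeXr; move: cop; rewrite coprimeMl => /andP[].
by rewrite Gauss_dvdl // (coprime_dvdr dP2 cDm).
Qed.

End LowestBandEntry.


Lemma image_one : bs_image rho 1.
Proof. by exists [::]; rewrite rho_nil. Qed.

Lemma image_mul g h : bs_image rho g -> bs_image rho h -> bs_image rho (g * h).
Proof. by move=> [u ->] [v ->]; exists (u ++ v); rewrite rho_cat. Qed.

Lemma image_unit g : bs_image rho g -> g \is a GRing.unit.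
Proof. by move=> [u ->]; exact: rho_unit. Qed.

(* The level: D is a power exponent for H, D' its m-free part, Y_ij = c0 / m^e
   with K the m-free part of c0, N2 = D' K, L the order of T mod N2, M = D L;
   then G((m^M + 1) N2) is contained in H. *)
Lemma image_CSP : has_CSP m (bs_image rho).
Proof.
move=> H subH finH.
have [D [D_gt0 HD]] := finite_index_powers image_one image_mul image_unit subH finH.
have [i [j [d [Yij dij d_gt0 band]]]] := lowest_band_entry.
have [c0 [e eY]] := entries_Y i j.
have c0_gt0 : (0 < `|c0|)%N.
  by rewrite absz_gt0; apply: contraNneq Yij => c00; rewrite eY c00 mul0r.
have [D' [P [s [eD cD' dP]]]] := coprime_part m_gt0 D_gt0.
have [K [P2 [s2 [eC cK dP2]]]] := coprime_part m_gt0 c0_gt0.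
have N2_gt0 : (0 < D' * K)%N.
  by move: D_gt0 c0_gt0; rewrite eD eC !muln_gt0 => /andP[-> _] /andP[-> _].
have cN2 : coprime (D' * K) m by rewrite coprimeMl cD' cK.
have [L [L_gt0 hL]] : exists L, (0 < L)%N /\ congr_one m (D' * K) (T ^+ L).
  have cN2' : coprime (D' * K).-1.+1 m by rewrite prednK.
  have := power_congr_one m_gt0 cN2' (rho_entries [:: lt]) (rho_entriesV [:: lt]) T_unit.
  by rewrite prednK.
set M := (D * L)%N.
have M_gt0 : (0 < M)%N by rewrite muln_gt0 D_gt0.
have cN : coprime ((m ^ M).+1 * (D' * K)) m.
  rewrite coprimeMl cN2 andbT; apply: (@coprime_dvdr _ (m ^ M)).
    by rewrite -{1}(expn1 m) dvdn_exp2l.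
  exact: coprimeSn.
exists ((m ^ M).+1 * (D' * K))%N; split => //; first by rewrite muln_gt0 N2_gt0.
move=> g [[w ->] hg]; have [p [q [z enf]]] := image_normal_form w; rewrite enf in hg *.
have cg : congr_one m ((m ^ M).+1 * (D' * K)) (normal_form p z q).
  by move=> k l; rewrite sub_entry one_entry; exact: hg.
have shiftM := normal_form_T_exponent Yij dij d_gt0 band M_gt0 N2_gt0 cN cg.
have cg2 : congr_one m (D' * K) (normal_form p z q).
  move=> k l; apply: (dvdZinv_dvd m_gt0 _ _ (cg k l)); first exact: dvdn_mull.
  by rewrite muln_gt0 N2_gt0.
have hz := congr_A_of_normal_form hL (dvd_shift_trans (dvdn_mull D (dvdnn L)) shiftM) cg2.
have dz := A_exponent_divisible Yij dij d_gt0 band eY eC dP2 N2_gt0 cN2 hz.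
exact: normal_form_in_subgroup subH HD eD dP dz (dvd_shift_trans (dvdn_mulr L (dvdnn D)) shiftM).
Qed.

End Representation.

Theorem theorem1p5 (m n : nat) (hm : (2 <= m)%N) (hn : (1 <= n)%N)
  (rho : bsword -> 'M[rat]_n) :
  bs_hom m rho -> (forall w, in_Tn m (rho w)) -> bs_injective m rho ->
  has_CSP m (bs_image rho).
Proof.
case: n hn rho => [//|n] _ rho hom hTn hinj.
exact: image_CSP hm hom hTn hinj.
Qed.
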